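(* Assume the standing assumptions with $L>\mu>0$, and let $x^*$ be a minimizer of $F$. Let $q:=\mu/L$, fix $r\in(\sqrt q,1/\sqrt q)$, set $\alpha:=r\sqrt q$ and $\theta:=(1-r^{-1}\sqrt q)(1-r\sqrt q)(1-q)^{-1}$. Consider the algorithm: $y_1=x_1\in\mathbb R^n$ arbitrary, and for $k\ge1$, $$x_{k+1}:=T_L(y_k)=y_k-L^{-1}\mathcal G_L(y_k),\qquad y_{k+1}:=x_{k+1}+\theta(x_{k+1}-x_k).$$ Then for all $k\ge1$, $$F(x_{k+1})-F(x^* )+\frac{L\alpha^2}{2}\big\|x_{k+1}-x^*+(\alpha^{-1}-1)(x_{k+1}-x_k)\big\|^2\le\Big(1-\min\Big(\frac{\mu}{\alpha L},\alpha\Big)\Big)^k\Big(F(x_1)-F(x^* )+\frac{L\alpha^2}{2}\|x_1-x^*\|^2\Big).$$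
   Context: Standing assumptions: $f:\mathbb R^n\to\mathbb R$ differentiable with $L$-Lipschitz gradient and $\mu$-strongly convex (i.e. $f-\frac\mu2\|\cdot\|^2$ convex); $g:\mathbb R^n\to\mathbb R\cup\{+\infty\}$ proper, closed, convex; $F=f+g$. $T_L(y):=\operatorname{argmin}_x\{g(x)+\langle\nabla f(y),x\rangle+\frac L2\|x-y\|^2\}$, $\mathcal G_L(y):=L(y-T_L(y))$. The right-hand side is $+\infty$ if $x_1\notin\operatorname{dom}g$. *)

(* R^n is modelled as row vectors 'rV[R]_n,
   with the Euclidean inner product written out explicitly. *)
From HB Require Import structures.
From mathcomp Require Import all_boot all_order all_algebra.
From mathcomp Require Import all_classical all_reals all_analysis.
Set Implicit Arguments. Unset Strict Implicit. Unset Printing Implicit Defensive.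
Import Order.TTheory GRing.Theory Num.Theory.
Import numFieldNormedType.Exports.
Local Open Scope classical_set_scope.
Local Open Scope ring_scope.

Section Defs.
Variables (R : realType) (n : nat).
Local Notation V := 'rV[R]_n.

Definition dotv (u v : V) : R := \sum_(i < n) u 0 i * v 0 i.
Definition sqnorm (u : V) : R := dotv u u.
Definition enorm (u : V) : R := Num.sqrt (sqnorm u).

Definition is_gradient (f : V -> R) (gradf : V -> V) : Prop :=
  forall x, differentiable f x /\ forall h, 'd f x h = dotv (gradf x) h.

Definition lipschitz_grad (gradf : V -> V) (L : R) : Prop :=
  forall x y, enorm (gradf x - gradf y) <= L * enorm (x - y).

Definition convex_fun (h : V -> R) : Prop :=
  forall x y (t : R), 0 <= t <= 1 ->
    h (t *: x + (1 - t) *: y) <= t * h x + (1 - t) * h y.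

Definition strongly_convex (f : V -> R) (mu : R) : Prop :=
  convex_fun (fun x => f x - mu / 2 * sqnorm x).

Definition proper_fun (g : V -> \bar R) : Prop :=
  (forall x, g x != -oo%E) /\ exists x, g x != +oo%E.

Definition closed_fun (g : V -> \bar R) : Prop :=
  forall a : R, closed [set x | (g x <= a%:E)%E].

Definition convex_efun (g : V -> \bar R) : Prop :=
  forall x y : V, forall t : R, 0 <= t <= 1 ->
    (g (t *: x + (1 - t) *: y)%R <= (t%:E * g x) + ((1 - t)%:E * g y))%E.

Definition compF (f : V -> R) (g : V -> \bar R) (x : V) : \bar R :=
  ((f x)%:E + g x)%E.

Definition is_argmin (phi : V -> \bar R) (x : V) : Prop :=
  forall z, (phi x <= phi z)%E.

Definition prox_obj (g : V -> \bar R) (gradf : V -> V) (L : R) (y : V)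
  (x : V) : \bar R :=
  (g x + (dotv (gradf y) x + L / 2 * sqnorm (x - y))%:E)%E.

Definition is_TL (g : V -> \bar R) (gradf : V -> V) (L : R) (y x : V) : Prop :=
  is_argmin (prox_obj g gradf L y) x.

End Defs.

(* Consider the Lyapunov function
     E_k = F(x_k) - F(xstar) + L alpha^2 / 2 |x_k - xstar + (1/alpha - 1)(x_k - x_{k-1})|^2.
   The descent lemma, strong convexity of f and the optimality condition of the
   proximal step give the proximal-gradient inequality
     F(T_L y) + <G, z - y> + |G|^2 / (2L) + mu/2 |z - y|^2 <= F(z),  G = L (y - T_L y).
   Taking y = y_k and z = x_k, z = xstar and weights 1 - alpha, alpha, the gradient
   terms recombine into the quadratic part of E_{k+1}, and what is left is a
   quadratic form in x_k - xstar, x_k - x_{k-1} that is nonnegative because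
   rho := min(q/alpha, alpha) satisfies rho <= alpha and rho alpha <= q.  Hence
   E_{k+1} <= (1 - rho) E_k, and the bound follows by iteration. *)

From HB Require Import structures.
From mathcomp Require Import all_boot all_order all_algebra.
From mathcomp Require Import all_classical all_reals all_analysis.
From mathcomp Require Import ring lra.
Import Order.TTheory GRing.Theory Num.Theory.
Import numFieldNormedType.Exports.
Local Open Scope ring_scope.

Set Implicit Arguments.
Unset Strict Implicit.
Unset Printing Implicit Defensive.

Section InnerProduct.
Variables (R : realType) (n : nat).
Local Notation V := 'rV[R]_n.

Lemma dotvC (u v : V) : dotv u v = dotv v u.
Proof. by apply: eq_bigr => i _; rewrite mulrC. Qed.

Lemma dotvDl (u v w : V) : dotv (u + v) w = dotv u w + dotv v w.
Proof. by rewrite /dotv -big_split; apply: eq_bigr => i _; rewrite mxE mulrDl. Qed.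

Lemma dotvZl (a : R) (u w : V) : dotv (a *: u) w = a * dotv u w.
Proof. by rewrite /dotv mulr_sumr; apply: eq_bigr => i _; rewrite mxE mulrA. Qed.

Lemma dotvNl (u w : V) : dotv (- u) w = - dotv u w.
Proof. by rewrite -scaleN1r dotvZl mulN1r. Qed.

Lemma dotvDr (u v w : V) : dotv w (u + v) = dotv w u + dotv w v.
Proof. by rewrite dotvC dotvDl !(dotvC w). Qed.

Lemma dotvZr (a : R) (u w : V) : dotv w (a *: u) = a * dotv w u.
Proof. by rewrite dotvC dotvZl dotvC. Qed.

Lemma dotvNr (u w : V) : dotv w (- u) = - dotv w u.
Proof. by rewrite dotvC dotvNl dotvC. Qed.

Lemma sqnorm_ge0 (u : V) : 0 <= sqnorm u.
Proof. by apply: sumr_ge0 => i _; rewrite -expr2 sqr_ge0. Qed.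

Lemma sqnormZ (a : R) (u : V) : sqnorm (a *: u) = a ^+ 2 * sqnorm u.
Proof. by rewrite /sqnorm dotvZl dotvZr mulrA expr2. Qed.

Lemma sqnormN (u : V) : sqnorm (- u) = sqnorm u.
Proof. by rewrite /sqnorm dotvNl dotvNr opprK. Qed.

Lemma sqnorm_enorm (u : V) : sqnorm u = enorm u ^+ 2.
Proof. by rewrite sqr_sqrtr // sqnorm_ge0. Qed.

End InnerProduct.

Ltac dotv_expand :=
  rewrite /sqnorm ?(dotvDl, dotvDr, dotvZl, dotvZr, dotvNl, dotvNr).

Section Quadratic.
Variables (R : realType) (n : nat).
Local Notation V := 'rV[R]_n.

Lemma dotv_le_of_sqnorm_le (a d : V) (c : R) : 0 < c ->
  sqnorm a <= c ^+ 2 * sqnorm d -> `|dotv a d| <= c * sqnorm d.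
Proof.
move=> c0 h; have h1 := sqnorm_ge0 (a - c *: d); have h2 := sqnorm_ge0 (a + c *: d).
move: h1 h2; dotv_expand; rewrite (dotvC d a) -/(sqnorm a) -/(sqnorm d) => h1 h2.
rewrite ler_norml; apply/andP; split; nra.
Qed.

(* With [s := q - rho al >= 0] the form equals
   [s al |u + (1/al - 1) d|^2 + (1 - al)^3 (1 - q/al) q / (al (1 - q)) |d|^2];
   the dependence on [rho] cancels in the coefficient of [|d|^2]. *)
Lemma lyapunov_form_ge0 (q al th rho : R) (u d : V) :
  0 < q -> q < al -> al < 1 -> th = (1 - q / al) * (1 - al) / (1 - q) ->
  rho * al <= q ->
  0 <= (1 - rho) * sqnorm (al *: u + (1 - al) *: d) - sqnorm (al *: u + th *: d)
       + q * ((1 - al) * th ^+ 2 * sqnorm d + al * sqnorm (u + th *: d)).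
Proof.
move=> q0 qal al1 -> rq.
have al0 : 0 < al by lra.
set k := (1 - al) ^+ 3 * (1 - q / al) * q / (al * (1 - q)).
have k0 : 0 <= k.
  rewrite /k; apply: divr_ge0; last by apply: mulr_ge0; lra.
  apply: mulr_ge0 => //; last exact: ltW.
  apply: mulr_ge0; first by apply: exprn_ge0; lra.
  by rewrite subr_ge0 ler_pdivrMr // mul1r ltW.
have [W0 D0] := (sqnorm_ge0 (u + (al^-1 - 1) *: d), sqnorm_ge0 d).
lazymatch goal with |- is_true ((0 : R) <= ?e) =>
  have -> : e = (q - rho * al) * al * sqnorm (u + (al^-1 - 1) *: d) + k * sqnorm d end.
  rewrite /k; dotv_expand; rewrite (dotvC d u); field; lra.
by apply: addr_ge0; apply: mulr_ge0 => //; apply: mulr_ge0; lra.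
Qed.

Lemma lyapunov_step_alg (L mu al th rho A B : R) (u d G : V) :
  0 < mu -> 0 < L -> mu / L < al -> al < 1 ->
  th = (1 - mu / L / al) * (1 - al) / (1 - mu / L) ->
  rho <= al -> rho * al <= mu / L -> 0 <= B ->
  A + dotv G (- (th *: d)) + sqnorm G / (2 * L) + mu / 2 * sqnorm (- (th *: d)) <= B ->
  A + dotv G (- (u + th *: d)) + sqnorm G / (2 * L)
    + mu / 2 * sqnorm (- (u + th *: d)) <= 0 ->
  A + L * al ^+ 2 / 2 *
      sqnorm (u + th *: d - L^-1 *: G + (al^-1 - 1) *: (th *: d - L^-1 *: G))
    <= (1 - rho) * (B + L * al ^+ 2 / 2 * sqnorm (u + (al^-1 - 1) *: d)).
Proof.
move=> mu0 L0 qal al1 hth ral rq B0 K1 K2.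
have al0 : 0 < al by apply: lt_trans qal; exact: divr_gt0.
have Q0 := lyapunov_form_ge0 u d (divr_gt0 mu0 L0) qal al1 hth rq.
rewrite -subr_ge0 in K1; rewrite -oppr_ge0 in K2; rewrite -subr_ge0.
set s1 := (X in _ <= X) in K1.
set s2 := (X in _ <= X) in K2.
set Q := (X in _ <= X) in Q0.
(* the gradient terms cancel in [(1 - al) K1 + al K2] *)
lazymatch goal with |- is_true ((0 : R) <= ?e) =>
  have -> : e = (1 - al) * s1 + al * s2 + (al - rho) * B + L / 2 * Q end.
  rewrite /s1 /s2 /Q; dotv_expand; rewrite ?(dotvC d u) ?(dotvC u G) ?(dotvC d G).
  field; lra.
have [h1 h2] : 0 <= (1 - al) * s1 /\ 0 <= al * s2 by split; apply: mulr_ge0; lra.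
have h3 : 0 <= (al - rho) * B by apply: mulr_ge0; lra.
have h4 : 0 <= L / 2 * Q by apply: mulr_ge0; lra.
lra.
Qed.

End Quadratic.

(* Stands in for the limit [t -> 0+] in first-order optimality arguments. *)
Lemma le0_of_le_mul_small (R : realFieldType) (a b : R) :
  (forall t, 0 < t < 1 -> a <= b * t) -> a <= 0.
Proof.
move=> h; rewrite leNgt; apply/negP => a0.
have [b0|b0] := lerP b 0; first by have := h (1 / 2) ltac:(lra); nra.
pose t := Num.min (1 / 2) (a / (2 * b)).
have t0 : 0 < t by rewrite lt_min; apply/andP; split; [lra | apply: divr_gt0; lra].
have t1 : t <= 1 / 2 by rewrite ge_min lexx.
have t2 : b * t <= a / 2.
  have -> : a / 2 = b * (a / (2 * b)) by field; lra.
  by rewrite ler_pM2l // ge_min lexx orbT.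
have := h t ltac:(lra); lra.
Qed.

Lemma MVT_everywhere (R : realType) (h dh : R -> R) (a b : R) : a < b ->
  (forall t : R, is_derive t 1 h (dh t)) ->
  exists2 c, a < c < b & h b - h a = dh c * (b - a).
Proof.
move=> ab hd; have hc : continuous h.
  by move=> t; have [dt _] := hd t; apply/differentiable_continuous/derivable1_diffP.
have [c] := MVT ab (fun t _ => hd t) (continuous_subspaceT hc).
by rewrite in_itv /=; exists c.
Qed.

Section SmoothFunction.
Variables (R : realType) (n : nat).
Local Notation V := 'rV[R]_n.
Variables (f : V -> R) (gradf : V -> V) (L : R).
Hypotheses (hg : is_gradient f gradf) (hL : lipschitz_grad gradf L) (L0 : 0 < L).

Lemma is_derive_along (d y : V) (t : R) :
  is_derive t 1 (fun s : R => f (s *: d + y)) (dotv (gradf (t *: d + y)) d).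
Proof.
pose l := (( *:%R^~ d) + cst y : R -> V).
have [dlt dlv] : is_diff t l (( *:%R^~ d) + 0) by apply: is_diffD.
have [df dfv] := hg (t *: d + y).
have dfl : differentiable (f \o l) t by exact: differentiable_comp.
change (is_derive t 1 (f \o l) (dotv (gradf (t *: d + y)) d)).
apply: (@is_derive_eq _ _ _ _ _ _ _ ('D_1 (f \o l) t)).
  exact/derivableP/diff_derivable.
by rewrite deriveE // diff_comp // /= dlv /= addr0 scale1r.
Qed.

Lemma dotv_grad_incr_le (d y : V) (t : R) : 0 < t ->
  `|dotv (gradf (t *: d + y) - gradf y) d| <= L * t * sqnorm d.
Proof.
move=> t0; apply: dotv_le_of_sqnorm_le; first exact: mulr_gt0.
have := hL (t *: d + y) y; rewrite addrK -ler_sqr ?nnegrE ?sqrtr_ge0 //; last first.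
  by apply: mulr_ge0; [exact: ltW | exact: sqrtr_ge0].
by rewrite exprMn -!sqnorm_enorm sqnormZ mulrA -exprMn.
Qed.

Lemma descent (y x : V) :
  f x <= f y + dotv (gradf y) (x - y) + L / 2 * sqnorm (x - y).
Proof.
rewrite -{1}(subrK y x); move: (x - y) => d.
pose D := dotv (gradf y) d; pose S := sqnorm d.
pose quad := fun s : R => D * s + L / 2 * S * s ^+ 2.
have dquad (t : R) : is_derive t 1 quad (D + L / 2 * S * (2 * t)).
  by apply: is_derive_eq; rewrite /GRing.scale /= !mulr1; ring.
pose phi := (fun t : R => f (t *: d + y)) - quad.
have dphi (t : R) : is_derive t 1 phi (dotv (gradf (t *: d + y)) d - (D + L / 2 * S * (2 * t))).
  by apply: is_deriveB; exact: is_derive_along.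
have [c /andP[c0 c1] hc] := MVT_everywhere ltr01 dphi.
move: hc; rewrite /phi /quad !fctE scale1r scale0r add0r expr1n expr0n /= !mulr0 !mulr1 subr0.
have := dotv_grad_incr_le d y c0; rewrite dotvDl dotvNl -/D -/S => /ler_normlP[_ hb].
lra.
Qed.

Variable mu : R.
Hypothesis hsc : strongly_convex f mu.

Lemma strongly_convex_combination (x z : V) (t : R) : 0 <= t <= 1 ->
  f (t *: x + (1 - t) *: z)
    <= t * f x + (1 - t) * f z - mu / 2 * (t * (1 - t)) * sqnorm (x - z).
Proof.
move=> t01; have := hsc x z t01.
have -> : sqnorm (t *: x + (1 - t) *: z)
    = t * sqnorm x + (1 - t) * sqnorm z - t * (1 - t) * sqnorm (x - z).
  by dotv_expand; rewrite (dotvC z x); ring.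
lra.
Qed.

Lemma strongly_convex_grad (y z : V) :
  f y + dotv (gradf y) (z - y) + mu / 2 * sqnorm (z - y) <= f z.
Proof.
rewrite -{3}(subrK y z); move: (z - y) => d.
pose D := dotv (gradf y) d; pose S := sqnorm d.
suff : D + mu / 2 * S - (f (d + y) - f y) <= 0 by rewrite -/D -/S; lra.
apply: (@le0_of_le_mul_small _ _ ((L + mu / 2) * S)) => t /andP[t0 t1].
have t01 : 0 <= t <= 1 by rewrite !ltW.
have := strongly_convex_combination (d + y) y t01.
have -> : t *: (d + y) + (1 - t) *: y = t *: d + y.
  by rewrite scalerDr -addrA -scalerDl addrCA subrr addr0 scale1r.
rewrite addrK -/S => hsc_t.
have [c /andP[c0 ct] hc] := MVT_everywhere t0 (is_derive_along d y).
move: hc; rewrite scale0r add0r subr0 => hc.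
have := dotv_grad_incr_le d y c0; rewrite dotvDl dotvNl -/D -/S => /ler_normlP[hb _].
have hb' : t * (D - L * t * S) <= t * dotv (gradf (c *: d + y)) d.
  rewrite ler_wpM2l ?(ltW t0) //; have : L * c * S <= L * t * S.
    by rewrite ler_wpM2r ?sqnorm_ge0 // ler_wpM2l ?(ltW L0) // ltW.
  lra.
rewrite -(ler_pM2l t0); lra.
Qed.

End SmoothFunction.

Section ProximalStep.
Variables (R : realType) (n : nat).
Local Notation V := 'rV[R]_n.
Variables (g : V -> \bar R) (gradf : V -> V) (L : R).
Hypothesis hconv : convex_efun g.

Lemma is_TL_optimality (y xp z : V) (gz gp : R) :
  is_TL g gradf L y xp -> g z = gz%:E -> g xp = gp%:E ->
  dotv (L *: (y - xp) - gradf y) (z - xp) <= gz - gp.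
Proof.
move=> hT hz hp.
suff : dotv (L *: (y - xp) - gradf y) (z - xp) - (gz - gp) <= 0 by lra.
apply: (@le0_of_le_mul_small _ _ (L / 2 * sqnorm (z - xp))) => t /andP[t0 t1].
have t01 : 0 <= t <= 1 by rewrite !ltW.
have hc := hconv z xp t01; rewrite hz hp in hc.
have := le_trans (hT (t *: z + (1 - t) *: xp)) (leeD2r _ hc).
rewrite /prox_obj hp -!EFinD lee_fin.
have -> : t *: z + (1 - t) *: xp = t *: (z - xp) + xp.
  by apply/rowP => i; rewrite !mxE; ring.
rewrite -[_ + xp - y]addrA -[y - xp]opprB.
move: (z - xp) (xp - y) (gradf y) => e b gy.
dotv_expand; rewrite (dotvC b e) => h.
rewrite -(ler_pM2l t0); lra.
Qed.

Lemma is_TL_fin_num (y x : V) :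
  proper_fun g -> is_TL g gradf L y x -> g x \is a fin_num.
Proof.
move=> [gNoo [x0 gx0]] hT; rewrite fin_numE gNoo /=; apply/eqP => gx.
have := hT x0; rewrite /prox_obj gx addye //.
by rewrite -(@fineK _ (g x0)) ?fin_numE ?gNoo // -EFinD leye_eq.
Qed.

End ProximalStep.

Section ProximalGradient.
Variables (R : realType) (n : nat).
Local Notation V := 'rV[R]_n.
Variables (f : V -> R) (gradf : V -> V) (g : V -> \bar R) (L mu : R).
Hypotheses (hg : is_gradient f gradf) (hL : lipschitz_grad gradf L) (L0 : 0 < L)
  (hsc : strongly_convex f mu) (hconv : convex_efun g).

Lemma prox_grad_ineq (y xn z : V) (gz gn : R) :
  is_TL g gradf L y xn -> g z = gz%:E -> g xn = gn%:E ->
  f xn + gn + dotv (L *: (y - xn)) (z - y) + sqnorm (L *: (y - xn)) / (2 * L)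
    + mu / 2 * sqnorm (z - y) <= f z + gz.
Proof.
have -> : sqnorm (L *: (y - xn)) / (2 * L) = L / 2 * sqnorm (xn - y).
  by rewrite -[y - xn]opprB sqnormZ sqnormN; field; rewrite gt_eqF.
move=> hT hz hn.
have h1 := is_TL_optimality hconv hT hz hn.
have h2 := strongly_convex_grad hg hL L0 hsc y z.
have h3 := descent hg hL L0 y xn.
move: h1 h2 h3; rewrite -[y - xn]opprB.
have -> : z - xn = (z - y) - (xn - y) by rewrite opprB addrA subrK.
move: (z - y) (xn - y) (gradf y) => a b gy.
by dotv_expand; rewrite (dotvC b a) (dotvC gy a) (dotvC gy b); lra.
Qed.

Lemma is_argmin_fin_num (xstar : V) :
  proper_fun g -> is_argmin (compF f g) xstar -> g xstar \is a fin_num.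
Proof.
move=> [gNoo [x0 gx0]] hmin; rewrite fin_numE gNoo /=; apply/eqP => gx.
have := hmin x0; rewrite /compF gx addey //.
by rewrite -(@fineK _ (g x0)) ?fin_numE ?gNoo // -EFinD leye_eq.
Qed.

(* equals [F v] only where [g v] is finite: [fine] sends the infinite values to 0 *)
Definition compFr (v : V) : R := f v + fine (g v).

Lemma compFE (v : V) : g v \is a fin_num -> compF f g v = (compFr v)%:E.
Proof. by move=> gv; rewrite /compF /compFr EFinD fineK. Qed.

Definition lyapunov (xstar : V) (al : R) (cur prev : V) : R :=
  compFr cur - compFr xstar
  + L * al ^+ 2 / 2 * sqnorm (cur - xstar + (al^-1 - 1) *: (cur - prev)).

Lemma lyapunov_decrease (xstar x p y xn : V) (al th rho : R) :
  0 < mu -> mu / L < al -> al < 1 ->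
  th = (1 - mu / L / al) * (1 - al) / (1 - mu / L) ->
  rho <= al -> rho * al <= mu / L ->
  y = x + th *: (x - p) -> is_TL g gradf L y xn ->
  g xstar \is a fin_num -> g x \is a fin_num -> g xn \is a fin_num ->
  compFr xstar <= compFr x ->
  lyapunov xstar al xn x <= (1 - rho) * lyapunov xstar al x p.
Proof.
move=> mu0 qal al1 hth ral rq hy hT gs gx gxn hmin.
have al0 : 0 < al by apply: lt_trans qal; exact: divr_gt0.
have K1 := prox_grad_ineq hT (esym (fineK gx)) (esym (fineK gxn)).
have K2 := prox_grad_ineq hT (esym (fineK gs)) (esym (fineK gxn)).
rewrite hy in K1 K2; set G := L *: (x + th *: (x - p) - xn) in K1 K2.
have e1 : x - (x + th *: (x - p)) = - (th *: (x - p)).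
  by rewrite opprD addrA subrr add0r.
have e2 : xstar - (x + th *: (x - p)) = - ((x - xstar) + th *: (x - p)).
  by apply/rowP => i; rewrite !mxE; ring.
rewrite e1 in K1; rewrite e2 in K2; rewrite /lyapunov.
have -> : xn - xstar + (al^-1 - 1) *: (xn - x)
    = (x - xstar) + th *: (x - p) - L^-1 *: G + (al^-1 - 1) *: (th *: (x - p) - L^-1 *: G).
  by rewrite /G; apply/rowP => i; rewrite !mxE; field; rewrite !gt_eqF.
apply: (lyapunov_step_alg mu0 L0 qal al1 hth ral rq); first by rewrite subr_ge0.
  by move: K1; rewrite /compFr; lra.
by move: K2; rewrite /compFr; lra.
Qed.

End ProximalGradient.

Lemma ler_geometric (R : numDomainType) (c : R) (e : nat -> R) :
  0 <= c -> (forall j, e j.+1 <= c * e j) -> forall k, e k <= c ^+ k * e 0%N.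
Proof.
move=> c0 he; elim=> [|k IH]; first by rewrite expr0 mul1r.
by rewrite exprS -mulrA; apply: le_trans (he k) _; rewrite ler_wpM2l.
Qed.

Lemma min_rate_mul_le (R : realFieldType) (mu L al : R) : 0 < al -> 0 < L ->
  Num.min (mu / (al * L)) al * al <= mu / L.
Proof.
move=> al0 L0; have : Num.min (mu / (al * L)) al <= mu / (al * L) by rewrite ge_min lexx.
by rewrite -ler_pdivlMr // invfM mulrA mulrAC.
Qed.

Lemma momentum_params (R : realType) (q r : R) :
  0 < q < 1 -> Num.sqrt q < r -> r < (Num.sqrt q)^-1 ->
  [/\ q < r * Num.sqrt q, r * Num.sqrt q < 1
    & r^-1 * Num.sqrt q = q / (r * Num.sqrt q)].
Proof.
move=> /andP[q0 q1] sqr rsq.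
have s0 : 0 < Num.sqrt q by rewrite sqrtr_gt0.
have ss : Num.sqrt q * Num.sqrt q = q by rewrite -expr2 sqr_sqrtr // ltW.
have r0 : 0 < r by apply: lt_trans sqr.
split.
- by rewrite -{1}ss ltr_pM2r.
- by move: rsq; rewrite -div1r ltr_pdivlMr.
- by rewrite -{2}ss; field; rewrite !gt_eqF.
Qed.

Theorem mainTheorem14 (R : realType) (n : nat)
  (f : 'rV[R]_n -> R) (gradf : 'rV[R]_n -> 'rV[R]_n) (g : 'rV[R]_n -> \bar R)
  (L mu : R) (xstar : 'rV[R]_n) (r : R) (x y : nat -> 'rV[R]_n) :
  0 < mu -> mu < L ->
  is_gradient f gradf -> lipschitz_grad gradf L -> strongly_convex f mu ->
  proper_fun g -> closed_fun g -> convex_efun g ->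
  is_argmin (compF f g) xstar ->
  let q := mu / L in
  Num.sqrt q < r -> r < (Num.sqrt q)^-1 ->
  let alpha := r * Num.sqrt q in
  let theta := (1 - r^-1 * Num.sqrt q) * (1 - r * Num.sqrt q) / (1 - q) in
  y 1%N = x 1%N ->
  (forall k, (1 <= k)%N -> is_TL g gradf L (y k) (x k.+1)) ->
  (forall k, (1 <= k)%N -> y k.+1 = x k.+1 + theta *: (x k.+1 - x k)) ->
  forall k, (1 <= k)%N ->
    (compF f g (x k.+1) - compF f g xstar
      + (L * alpha ^+ 2 / 2 *
         sqnorm (x k.+1 - xstar + (alpha^-1 - 1) *: (x k.+1 - x k)))%:E
     <= ((1 - Num.min (mu / (alpha * L)) alpha) ^+ k)%:E *
        (compF f g (x 1%N) - compF f g xstar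
          + (L * alpha ^+ 2 / 2 * sqnorm (x 1%N - xstar))%:E))%E.
Proof.
(* closedness of [g] only serves the existence of [T_L y], which is given here *)
move=> mu0 muL hg hL hsc hprop _ hconv hstar q sqr rsq al th hy1 hT hyk k hk.
have L0 : 0 < L by apply: lt_trans muL.
have q01 : 0 < q < 1 by rewrite divr_gt0 //= ltr_pdivrMr // mul1r.
have [qal al1 hrq] := momentum_params q01 sqr rsq.
have al0 : 0 < al by apply: lt_trans qal; case/andP: q01.
have hth : th = (1 - q / al) * (1 - al) / (1 - q) by rewrite /th hrq.
set rho := Num.min _ al.
have ral : rho <= al by rewrite ge_min lexx orbT.
have rq : rho * al <= q := min_rate_mul_le mu al0 L0.
have gs := is_argmin_fin_num hprop hstar.
have [gx1|gx1] := eqVneq (g (x 1%N)) +oo%E.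
  rewrite (compFE f gs) /compF gx1 addey // mulry gtr0_sg ?mul1e ?leey //.
  by apply: exprn_gt0; rewrite subr_gt0 (le_lt_trans ral).
have gx j : (1 <= j)%N -> g (x j) \is a fin_num.
  case: j => [//|[_|j _]]; first by rewrite fin_numE gx1 andbT; exact: hprop.1.
  exact: is_TL_fin_num hprop (hT _ _).
(* [prev 0 = x 1] encodes the start [y 1 = x 1] as a momentum step *)
pose prev j := x (maxn 1 j).
have hy j : y j.+1 = x j.+1 + th *: (x j.+1 - prev j).
  case: j => [|j]; first by rewrite hy1 subrr scaler0 addr0.
  by rewrite /prev (maxn_idPr (ltn0Sn j)); apply: hyk.
pose e j := lyapunov f g L xstar al (x j.+1) (prev j).
have step j : e j.+1 <= (1 - rho) * e j.
  rewrite /e {1}/prev (maxn_idPr (ltn0Sn j)).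
  apply: (lyapunov_decrease hg hL L0 hsc hconv mu0 qal al1 hth ral rq (hy j)
    (hT j.+1 isT) gs (gx j.+1 isT) (gx j.+2 isT)).
  by have := hstar (x j.+1); rewrite !compFE ?lee_fin ?gx.
have rho1 : 0 <= 1 - rho by rewrite subr_ge0 (le_trans ral) ?ltW.
have := ler_geometric rho1 step k.
rewrite /e /prev /lyapunov (maxn_idPr hk) /= subrr scaler0 addr0.
by rewrite !compFE ?gx // -!EFinB -!EFinD -EFinM lee_fin.
Qed.
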